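(* Let $R\subseteq[n-1]$. An $R$-permutation $\pi$ is $R$-312-avoiding if and only if for every $h\in[r]$ one has $$\big(\min\{\pi_{q_h+1},\dots,\pi_{q_{h+1}}\},\ \max\{\pi_1,\dots,\pi_{q_h}\}\big)\subseteq\{\pi_1,\dots,\pi_{q_{h+1}}\},$$ where $(x,y)$ denotes the set of integers strictly between $x$ and $y$.
   Context: Fix $n\ge1$, $[m]=\{1,\dots,m\}$. Fix $R\subseteq[n-1]$ with elements $q_1<\dots<q_r$ ($r=|R|\ge 0$), $q_0:=0$, $q_{r+1}:=n$. The $h$-th carrel ($h\in[r+1]$) is the index set $\{q_{h-1}+1,\dots,q_h\}$. An $R$-permutation is a permutation $\pi=(\pi_1,\dots,\pi_n)$ of $[n]$ in one-line notation that is strictly increasing on each carrel. An $R$-permutation $\pi$ is $R$-312-containing if there exist $h\in[r-1]$ and indices $1\le a\le q_h<b\le q_{h+1}<c\le n$ with $\pi_b<\pi_c<\pi_a$; otherwise it is $R$-312-avoiding. *)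

From mathcomp Require Import all_boot.
Set Implicit Arguments. Unset Strict Implicit. Unset Printing Implicit Defensive.

(* R ⊆ [n-1] is given by its increasing enumeration R = [:: q_1; ...; q_r]
   (a strictly increasing list of integers in [1, n-1]).
   A permutation pi of [n] in one-line notation is a seq nat; entries are
   1-based: pi_i = nth 0 pi i.-1. *)


Definition qR (n : nat) (R : seq nat) (h : nat) : nat :=
  if h == 0 then 0 else if h <= size R then nth 0 R h.-1 else n.

Definition pe (pi : seq nat) (i : nat) : nat := nth 0 pi i.-1.

Definition valid_R (n : nat) (R : seq nat) : Prop :=
  sorted ltn R /\ all (fun x => (0 < x) && (x < n)) R.

Definition R_perm (n : nat) (R : seq nat) (pi : seq nat) : Prop :=
  perm_eq pi (iota 1 n) /\
  forall h, 1 <= h <= size R + 1 ->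
    forall i j, qR n R h.-1 < i -> i < j -> j <= qR n R h -> pe pi i < pe pi j.

Definition R312_containing (n : nat) (R : seq nat) (pi : seq nat) : Prop :=
  exists h a b c,
    [/\ 1 <= h <= size R - 1,
        1 <= a <= qR n R h,
        qR n R h < b <= qR n R h.+1,
        qR n R h.+1 < c <= n &
        pe pi b < pe pi c < pe pi a].

Definition R312_avoiding (n : nat) (R : seq nat) (pi : seq nat) : Prop :=
  ~ R312_containing n R pi.

From mathcomp Require Import all_boot.
From mathcomp Require Import zify.

(* A value x strictly between the minimum of carrel h+1 and the maximum of
   the first h carrels that is missing from pi_1 ... pi_{q_{h+1}} occurs at some
   position c > q_{h+1}; together with positions realising that minimum and
   maximum it forms an R-312 pattern (c <= n forces h < r).  Conversely the
   middle value pi_c of a pattern lies in that range and, pi being injective,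
   is absent from the prefix. *)

Section BigMinMax.

Context {I : eqType} {r : seq I} {F : I -> nat}.

Lemma geq_bigmin_seq d i : i \in r -> \big[minn/d]_(j <- r) F j <= F i.
Proof.
elim: r => [|y s IH] //; rewrite big_cons in_cons => /orP [/eqP->|si].
- exact: geq_minl.
- by rewrite geq_min IH ?orbT.
Qed.

Lemma bigmin_ltn_seq {d x} :
  x <= d -> \big[minn/d]_(i <- r) F i < x -> exists2 i, i \in r & F i < x.
Proof.
move=> le_xd; rewrite ltnNge => lt_min; apply/hasP; apply: contraNT lt_min.
move=> /hasPn ge_x; rewrite big_seq; elim/big_ind: _ => // [m p|i ri].
- by rewrite leq_min => ->.
- by rewrite leqNgt ge_x.
Qed.

Lemma bigmax_gtn_seq {x} :
  x < \max_(i <- r) F i -> exists2 i, i \in r & x < F i.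
Proof.
rewrite ltnNge => lt_max; apply/hasP; apply: contraNT lt_max.
by move=> /hasPn le_x; apply/bigmax_leqP_seq => i ri _; rewrite leqNgt le_x.
Qed.

End BigMinMax.

Lemma qR_last n R : qR n R (size R).+1 = n.
Proof. by rewrite /qR /= ltnn. Qed.

Section PositionsInSeq.

Context {s : seq nat} {q : nat}.

Lemma pe_index x : x \in s -> pe s (index x s).+1 = x.
Proof. exact: nth_index. Qed.

Lemma notin_take_index {x} :
  x \in s -> x \notin take q s -> q < (index x s).+1 <= size s.
Proof. by move=> sx; rewrite in_take // -ltnNge => ->; rewrite index_mem. Qed.

Lemma pe_notin_take c : uniq s -> q < c <= size s -> pe s c \notin take q s.
Proof.
move=> uniq_s /andP [lt_qc le_cs]; have lt_c1s : c.-1 < size s by lia.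
by rewrite in_take ?mem_nth // /pe index_uniq // -ltnNge; lia.
Qed.

End PositionsInSeq.

Section R312.

Context {n : nat} {R pi : seq nat}.
Hypothesis perm_pi : perm_eq pi (iota 1 n).

Let size_pi : size pi = n.
Proof. by rewrite (perm_size perm_pi) size_iota. Qed.

Let uniq_pi : uniq pi.
Proof. by rewrite (perm_uniq perm_pi) iota_uniq. Qed.

Let mem_pi y : (y \in pi) = (1 <= y <= n).
Proof. by rewrite (perm_mem perm_pi) mem_iota add1n ltnS. Qed.

Let pe_leq i : pe pi i <= n.
Proof.
rewrite /pe; case: (ltnP i.-1 (size pi)) => [lt_i | ?]; last by rewrite nth_default.
by have := mem_nth 0 lt_i; rewrite mem_pi => /andP [].
Qed.

Lemma R312_pattern_value {h a b c} :
  1 <= a <= qR n R h -> qR n R h < b <= qR n R h.+1 ->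
  qR n R h.+1 < c <= n -> pe pi b < pe pi c < pe pi a ->
  [/\ \big[minn/n.+1]_((qR n R h).+1 <= i < (qR n R h.+1).+1) pe pi i < pe pi c,
      pe pi c < \max_(1 <= i < (qR n R h).+1) pe pi i &
      pe pi c \notin take (qR n R h.+1) pi].
Proof.
move=> a_in b_in c_in /andP [lt_bc lt_ca]; split.
- by apply: leq_ltn_trans lt_bc; apply: geq_bigmin_seq; rewrite mem_index_iota; lia.
- by apply: leq_trans lt_ca _; apply: leq_bigmax_seq; rewrite // mem_index_iota; lia.
- by apply: pe_notin_take; rewrite // size_pi.
Qed.

Lemma R312_pattern_of_value {h x} :
  1 <= h <= size R ->
  \big[minn/n.+1]_((qR n R h).+1 <= i < (qR n R h.+1).+1) pe pi i < x ->
  x < \max_(1 <= i < (qR n R h).+1) pe pi i ->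
  x \notin take (qR n R h.+1) pi -> R312_containing n R pi.
Proof.
move=> h_in lt_min lt_max x_out.
have [a a_in lt_xa] := bigmax_gtn_seq lt_max.
have le_xn : x <= n by have := pe_leq a; lia.
have [b b_in lt_bx] := bigmin_ltn_seq (leqW le_xn) lt_min.
have pi_x : x \in pi by rewrite mem_pi; apply/andP; split; lia.
have := notin_take_index pi_x x_out; rewrite size_pi => c_in.
have lt_h : h < size R.
  rewrite ltnNge; apply: contraTN c_in => ge_h; have -> : h = size R by lia.
  by rewrite qR_last; lia.
exists h, a, b, (index x pi).+1; split; rewrite ?pe_index //.
- lia.
- by move: a_in; rewrite mem_index_iota.
- by move: b_in; rewrite mem_index_iota.
- by rewrite lt_bx lt_xa.
Qed.

End R312.

Theorem fact4p4 (n : nat) (R : seq nat) (pi : seq nat) :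
  1 <= n -> valid_R n R -> R_perm n R pi ->
  (R312_avoiding n R pi <->
   forall h, 1 <= h <= size R ->
     forall x : nat,
       \big[minn/n.+1]_((qR n R h).+1 <= i < (qR n R h.+1).+1) pe pi i < x ->
       x < \max_(1 <= i < (qR n R h).+1) pe pi i ->
       x \in take (qR n R h.+1) pi).
Proof.
move=> _ _ [perm_pi _]; split.
- move=> avoid h h_in x lt_min lt_max; apply/negPn/negP => x_out.
  exact: avoid (R312_pattern_of_value perm_pi h_in lt_min lt_max x_out).
- move=> in_prefix [h [a [b [c [h_in a_in b_in c_in ord]]]]].
  have [lt_min lt_max /negP] := R312_pattern_value perm_pi a_in b_in c_in ord.
  by apply; apply: in_prefix lt_min lt_max; lia.
Qed.
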